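(* For all integers $n,f$ with $1\le f\le n-2$, $\mathrm{Cons}(n,f)$ is $C$-reducible to the wait-free Consensus task $\mathrm{Cons}(n,n-1)$, but $\mathrm{Cons}(n,n-1)$ is not $C$-reducible to $\mathrm{Cons}(n,f)$.
   Context: Model: a finite set of processes runs an asynchronous algorithm communicating by reliable message passing with unbounded delays and speeds; processes fail only by crashing. Time is $\mathcal T=\mathbb N$; a failure pattern $F$ for $\Pi$ is a nondecreasing map $\mathcal T\to2^\Pi$, $Faulty(F)=\bigcup_tF(t)$. A task $T=(P,f)$ consists of a binary agreement problem $P$ (mapping $(F,\vec V)$, $\vec V\in\{0,1\}^\Pi$, to a nonempty $P(F,\vec V)\subseteq\{0,1\}$) and a resiliency degree $f$. An algorithm solves $T$ if in every run with $|Faulty(F)|\le f$ and initial values $\vec V$: every correct process eventually decides, decisions are irrevocable, no two processes decide differently, and decisions lie in $P(F,\vec V)$. Binary Consensus $\mathrm{Cons}(n,f)=(\mathrm{Cons}_{\Pi},f)$ on $\Pi=\{1,\dots,n\}$: $\mathrm{Cons}_\Pi(F,\vec V)=\{v\}$ if all entries of $\vec V$ equal $v$, and $\{0,1\}$ otherwise. Oracles: for $T=(P,f)$ on $\Pi$, $\mathcal O.T$ is a black box with consultants $\Pi$; its history is a sequence of successive consultations, in each of which every consultant may submit at most one query in $\{0,1\}$ and the oracle returns a common response $d$ with $d\in P(F,\vec V)$ for every $\vec V$ extending the partial query vector (the oracle may use the whole failure pattern, including future crashes), and every correct querier gets the response whenever at least $|\Pi|-f$ consultants query; $\mathcal O.T$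 is the most general such oracle. $T_1\le_C T_2$ means there is an algorithm solving $T_1$ whose processes, besides message passing, may consult the oracle $\mathcal O.T_2$. *)

From mathcomp Require Import all_boot.
Set Implicit Arguments. Unset Strict Implicit. Unset Printing Implicit Defensive.

Section Model.
Variable n : nat.
(* Processes Pi = {1,...,n} are represented by 'I_n. Time is nat. *)

Definition failure_pattern := nat -> {set 'I_n}.
Definition is_failure_pattern (F : failure_pattern) : Prop :=
  forall t t', t <= t' -> F t \subset F t'.
Definition faulty (F : failure_pattern) (p : 'I_n) : Prop := exists t, p \in F t.
Definition correct (F : failure_pattern) (p : 'I_n) : Prop := ~ faulty F p.
Definition at_most_faulty (F : failure_pattern) (f : nat) : Prop :=
  exists X : {set 'I_n}, #|X| <= f /\ forall p, faulty F p -> p \in X.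

(* A binary agreement problem: d \in P F V  is written  P F V d. *)
Definition agreement_problem := failure_pattern -> ('I_n -> bool) -> bool -> Prop.

Record task := Task { tprob : agreement_problem; tres : nat }.

(* Cons_Pi(F,V) = {v} if all entries of V equal v, {0,1} otherwise. *)
Definition Cons_prob : agreement_problem :=
  fun F V d => forall v : bool, (forall i, V i = v) -> d = v.
Definition Consensus (f : nat) : task := Task Cons_prob f.

(* What a process receives in one step: nothing, a message (with its
   sender), or the response d of the oracle to consultation k. *)
Inductive event (M : Type) :=
  | EvNone
  | EvMsg of 'I_n & M
  | EvResp of nat & bool.

(* A (deterministic) algorithm that may consult an oracle: each step maps the
   current local state and the received event to a new state, a finite list
   of messages (destination, content) to send, and optionally a query
   (k, b): submit query b to consultation number k. *)
Record algorithm := Algorithm {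
  St : Type;
  Msg : Type;
  init : 'I_n -> bool -> St;
  step : 'I_n -> St -> event Msg -> St * seq ('I_n * Msg) * option (nat * bool);
  decision : St -> option bool }.

(* A run: who steps at each time, what it receives, the configurations,
   what is sent/queried, which send each received message comes from,
   and for each consultation k the oracle's (time of response, common
   response). *)
Record run (A : algorithm) := Run {
  sched : nat -> option 'I_n;
  ev : nat -> event (Msg A);
  cfg : nat -> 'I_n -> St A;
  sent : nat -> seq ('I_n * Msg A);
  qry : nat -> option (nat * bool);
  msrc : nat -> nat * nat;
  resp : nat -> option (nat * bool) }.

Variable A : algorithm.

(* p submits (its unique, i.e. first) query b to consultation k at time t *)
Definition first_query (r : run A) (p : 'I_n) (k t : nat) (b : bool) : Prop :=
  sched r t = Some p /\ qry r t = Some (k, b) /\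
  forall t0, t0 < t -> sched r t0 = Some p -> forall b0, qry r t0 <> Some (k, b0).

Definition queried_before (r : run A) (p : 'I_n) (k tau : nat) (b : bool) : Prop :=
  exists t, t < tau /\ first_query r p k t b.

Definition admissible (T2 : task) (F : failure_pattern) (V : 'I_n -> bool)
    (r : run A) : Prop :=
  (forall p, cfg r 0 p = @init A p (V p)) /\
  (forall t, match sched r t with
     | None => (forall p, cfg r t.+1 p = cfg r t p) /\ sent r t = [::] /\
               qry r t = None /\ ev r t = @EvNone _
     | Some p =>
        let: (s', ms, q) := @step A p (cfg r t p) (ev r t) in
        p \notin F t /\ cfg r t.+1 p = s' /\
        (forall p', p' != p -> cfg r t.+1 p' = cfg r t p') /\
        sent r t = ms /\ qry r t = q
     end) /\
  (forall t p q m, sched r t = Some p -> ev r t = EvMsg q m ->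
     (msrc r t).1 < t /\ sched r (msrc r t).1 = Some q /\
     onth (sent r (msrc r t).1) (msrc r t).2 = Some (p, m)) /\
  (* no duplication *)
  (forall t1 t2 p1 p2 q1 q2 m1 m2,
     sched r t1 = Some p1 -> ev r t1 = EvMsg q1 m1 ->
     sched r t2 = Some p2 -> ev r t2 = EvMsg q2 m2 ->
     msrc r t1 = msrc r t2 -> t1 = t2) /\
  (forall t' q i p m, sched r t' = Some q -> onth (sent r t') i = Some (p, m) ->
     correct F p ->
     exists t, sched r t = Some p /\ ev r t = EvMsg q m /\ msrc r t = (t', i)) /\
  (* oracle safety: the common response d lies in P(F,V') for every V'
     extending the partial query vector at response time *)
  (forall k tau d, resp r k = Some (tau, d) ->
     forall V' : 'I_n -> bool,
       (forall p b, queried_before r p k tau b -> V' p = b) -> tprob T2 F V' d) /\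
  (forall t p k d, sched r t = Some p -> ev r t = EvResp _ k d ->
     exists tau b, resp r k = Some (tau, d) /\ tau <= t /\ queried_before r p k tau b) /\
  (forall t1 t2 p k d1 d2,
     sched r t1 = Some p -> ev r t1 = EvResp _ k d1 ->
     sched r t2 = Some p -> ev r t2 = EvResp _ k d2 -> t1 = t2) /\
  (* oracle liveness: if at least |Pi| - f consultants query consultation k,
     every correct querier gets the response *)
  (forall k (Q : {set 'I_n}), n - tres T2 <= #|Q| ->
     (forall p, p \in Q -> exists t b, first_query r p k t b) ->
     exists tau d, resp r k = Some (tau, d) /\
       forall p t b, correct F p -> first_query r p k t b ->
         exists t', sched r t' = Some p /\ ev r t' = EvResp _ k d) /\
  (forall p, correct F p -> forall t, exists t', t <= t' /\ sched r t' = Some p).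

Definition solves_with (T1 T2 : task) : Prop :=
  forall (F : failure_pattern) (V : 'I_n -> bool) (r : run A),
    is_failure_pattern F -> at_most_faulty F (tres T1) -> admissible T2 F V r ->
    [/\
        (forall p, correct F p -> exists t v, @decision A (cfg r t p) = Some v),
        (forall p t t' v, t <= t' -> @decision A (cfg r t p) = Some v ->
           @decision A (cfg r t' p) = Some v),
        (forall p q t t' v w, @decision A (cfg r t p) = Some v ->
           @decision A (cfg r t' q) = Some w -> v = w) &
        (forall p t v, @decision A (cfg r t p) = Some v -> tprob T1 F V v)].

End Model.

Definition C_reducible (n : nat) (T1 T2 : task n) : Prop :=
  exists A : algorithm n, solves_with A T1 T2.

(* Each process can hand its input to the wait-free consensus oracle and decide the
   response: a single querier is enough to make that oracle answer.

   Conversely, an oracle of resiliency f <= n - 2 need only answer a consultation when at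
   least two processes query it. Let p run alone (all others crashed) with input 0: it
   must decide 0. Let q run alone with input 1, each of its queries being answered with
   its own value: it must decide 1. Now glue the two runs: p runs alone until it decides
   and then crashes, q runs alone afterwards, and p's messages to q are delivered only
   after q has decided. Channels and oracle behave as required, yet p and q disagree. *)

From mathcomp Require Import all_boot zify.
From Stdlib Require Import ClassicalEpsilon.
Set Implicit Arguments. Unset Strict Implicit. Unset Printing Implicit Defensive.

Section AdmissibleRun.
Variables (n : nat) (A : algorithm n) (T : task n) (F : failure_pattern n).
Variables (V : 'I_n -> bool) (r : run A).
Hypothesis adm : admissible T F V r.

Lemma admissible_step t p : sched r t = Some p ->
  [/\ cfg r t.+1 p = (step p (cfg r t p) (ev r t)).1.1,
      (forall p', p' != p -> cfg r t.+1 p' = cfg r t p'),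
      sent r t = (step p (cfg r t p) (ev r t)).1.2 &
      qry r t = (step p (cfg r t p) (ev r t)).2].
Proof.
case: adm => _ [H _] E; move: (H t); rewrite E.
by case: (step _ _ _) => [[s ms] qo] [_ [? [? [? ?]]]]; split.
Qed.

Lemma admissible_idle t : sched r t = None -> forall p, cfg r t.+1 p = cfg r t p.
Proof. by case: adm => _ [H _] E; move: (H t); rewrite E => [[]]. Qed.

End AdmissibleRun.

Section OracleConsensus.
Variable n : nat.

Definition oracle_cons_step (p : 'I_n) (s : bool * option bool) (e : event n unit) :
    (bool * option bool) * seq ('I_n * unit) * option (nat * bool) :=
  (match e with
   | EvResp 0 d => (s.1, if s.2 is Some x then Some x else Some d)
   | _ => s end, [::], Some (0, s.1)).

Definition oracle_cons : algorithm n :=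
  @Algorithm n (bool * option bool)%type unit (fun _ b => (b, None)) oracle_cons_step snd.

Variables (F : failure_pattern n) (V : 'I_n -> bool) (r : run oracle_cons).
Hypothesis adm : admissible (Consensus n (n - 1)) F V r.

Lemma oracle_cons_input t p : (cfg r t p).1 = V p.
Proof.
elim: t => [|t IH]; first by case: adm => ->.
case E: (sched r t) => [p'|]; last by rewrite (admissible_idle adm E).
have [Hself Hframe _ _] := admissible_step adm E.
case: (eqVneq p p') => [ep|ne]; last by rewrite Hframe.
subst p'.
by rewrite Hself; case: (ev r t) => [|? ?|[|k] d].
Qed.

Lemma oracle_cons_query t p : sched r t = Some p -> qry r t = Some (0, V p).
Proof.
by move=> E; have [_ _ _ ->] := admissible_step adm E; rewrite /= oracle_cons_input.
Qed.

Lemma oracle_cons_decision_received t p v : (cfg r t p).2 = Some v ->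
  exists t0, sched r t0 = Some p /\ ev r t0 = EvResp _ _ 0 v.
Proof.
elim: t => [|t IH]; first by case: adm => ->.
case E: (sched r t) => [p'|]; last by rewrite (admissible_idle adm E); apply: IH.
have [Hself Hframe _ _] := admissible_step adm E.
case: (eqVneq p p') => [ep|ne]; last by rewrite Hframe //; apply: IH.
subst p'; rewrite Hself; case Ee: (ev r t) => [|? ?|[|k] d] /=; try exact: IH.
case: (cfg r t p).2 IH => [x|] IH /=; first exact: IH.
by case=> <-; exists t.
Qed.

Lemma oracle_cons_decision_stable t t' p v : t <= t' ->
  (cfg r t p).2 = Some v -> (cfg r t' p).2 = Some v.
Proof.
move=> /subnK <-; elim: (t' - t) => [|k IH] //= H.
rewrite addSn; case E: (sched r (k + t)) => [p'|].
  have [Hself Hframe _ _] := admissible_step adm E.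
  case: (eqVneq p p') => [ep|ne]; last by rewrite Hframe //; apply: IH.
  by subst p'; rewrite Hself; case: (ev r (k + t)) => [|? ?|[|k'] d] /=; rewrite ?(IH H).
by rewrite (admissible_idle adm E); apply: IH.
Qed.

Lemma oracle_cons_decision_response t p v : (cfg r t p).2 = Some v ->
  exists tau, resp r 0 = Some (tau, v).
Proof.
case/oracle_cons_decision_received=> t0 [E0 Ev0].
case: adm => [_ [_ [_ [_ [_ [_ [Hresp _]]]]]]].
by have [tau [b [-> _]]] := Hresp _ _ _ _ E0 Ev0; exists tau.
Qed.

Lemma oracle_cons_validity t p v : (cfg r t p).2 = Some v -> Cons_prob F V v.
Proof.
case/oracle_cons_decision_response=> tau Er.
case: adm => [_ [_ [_ [_ [_ [Hsafe _]]]]]].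
apply: (Hsafe _ _ _ Er V) => p' b [t0 [_ [E0 [Q0 _]]]].
by move: Q0; rewrite (oracle_cons_query E0) => [[]].
Qed.

(* A single querier suffices for the wait-free oracle to answer. *)
Lemma oracle_cons_termination p : correct F p -> exists t v, (cfg r t p).2 = Some v.
Proof.
case: adm => [_ [_ [_ [_ [_ [_ [_ [_ [Hlive Hfair]]]]]]]]] cp.
have ex : exists t, sched r t == Some p by have [t [_ h]] := Hfair p cp 0; exists t; rewrite h.
have fq : first_query r p 0 (ex_minn ex) (V p).
  case: ex_minnP => m /eqP Em Hmin; split=> //; split; first exact: oracle_cons_query.
  by move=> t1 lt1 E1; have := Hmin _ (introT eqP E1); rewrite leqNgt lt1.
have [||tau [d [_ Hd]]] := Hlive 0 [set p].
- by rewrite cards1 /=; lia.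
- by move=> x; rewrite inE => /eqP ->; exists (ex_minn ex), (V p).
have [t' [E1 E2]] := Hd _ _ _ cp fq.
exists t'.+1; have [-> _ _ _] := admissible_step adm E1.
by rewrite /= E2 /=; case: (cfg r t' p).2 => [x|]; eexists.
Qed.

End OracleConsensus.

Lemma Cons_reducible_wait_free n f : C_reducible (Consensus n f) (Consensus n (n - 1)).
Proof.
exists (oracle_cons n) => F V r _ _ adm; split.
- exact: oracle_cons_termination adm.
- by move=> p t t' v; exact: (oracle_cons_decision_stable adm).
- move=> p q t t' v w /(oracle_cons_decision_response adm) [? E1].
  by move=> /(oracle_cons_decision_response adm) [? E2]; congruence.
- by move=> p t v; exact: (oracle_cons_validity adm).
Qed.

(* The adversary's runs of an algorithm [A] in which only two processes [p] and [q] ever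
   step, following the schedule [sc]. A process receives its own messages in FIFO order,
   [q] receives [p]'s messages only from time [R] on, and all other messages are dropped.
   Every first query of [q] to a consultation is answered at once with [q]'s own query
   value; [p] is never answered. *)
Section Simulation.
Variables (n : nat) (A : algorithm n) (p q : 'I_n) (sc : nat -> option 'I_n).
Variables (R : nat) (V : 'I_n -> bool).
Hypothesis pq : p != q.

(* [Pmsg t i s m]: the [i]-th message sent at time [t], by [s], with content [m];
   [Presp k b]: the response [b] to consultation [k]. *)
Inductive pending := Pmsg of nat & nat & 'I_n & Msg A | Presp of nat & bool.

Record sstate := SState {
  scfg : 'I_n -> St A;
  inbox : 'I_n -> seq pending;
  held : seq pending;
  answered : seq nat }.

Definition release (s : sstate) :=
  SState (scfg s) (fun y => if y == q then inbox s y ++ held s else inbox s y) [::]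
         (answered s).

Definition tick t s := if t == R then release s else s.

Definition head_event (l : seq pending) : event n (Msg A) :=
  if l is it :: _ then
    match it with Pmsg _ _ s m => EvMsg s m | Presp k b => EvResp _ _ k b end
  else @EvNone n (Msg A).

Definition head_src (l : seq pending) := if l is Pmsg t i _ _ :: _ then (t, i) else (0, 0).

Fixpoint outbox (t i : nat) (x : 'I_n) (P : pred 'I_n) (ms : seq ('I_n * Msg A)) :=
  if ms is (d, m) :: ms' then
    (if P d then Pmsg t i x m :: outbox t i.+1 x P ms' else outbox t i.+1 x P ms')
  else [::].

Definition oracle_reply (x : 'I_n) (qo : option (nat * bool)) (K : seq nat) :=
  if x == q then (if qo is Some (k, b) then (if k \in K then [::] else [:: Presp k b]) else [::])
  else [::].

Definition record_query (x : 'I_n) (qo : option (nat * bool)) (K : seq nat) :=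
  if x == q then (if qo is Some (k, _) then (if k \in K then K else rcons K k) else K) else K.

Definition sim_step t x s :=
  let: (s', ms, qo) := @step n A x (scfg s x) (head_event (inbox s x)) in
  SState (fun y => if y == x then s' else scfg s y)
     (fun y => if y == x
               then behead (inbox s x) ++ outbox t 0 x (pred1 x) ms ++
                    oracle_reply x qo (answered s)
               else inbox s y)
     (held s ++ outbox t 0 x (fun d => (x == p) && (d == q)) ms)
     (record_query x qo (answered s)).

Fixpoint sim t :=
  if t is t'.+1 then
    (match sc t' with Some x => sim_step t' x (tick t' (sim t')) | None => tick t' (sim t') end)
  else SState (fun y => @init n A y (V y)) (fun _ => [::]) [::] [::].

Definition sim_pre t := tick t (sim t).
Definition inbox_at t x := inbox (sim_pre t) x.
Definition sim_ev t := if sc t is Some x then head_event (inbox_at t x) else @EvNone n (Msg A).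
Definition sim_out t x := @step n A x (scfg (sim t) x) (head_event (inbox_at t x)).
Definition sim_sent t := if sc t is Some x then (sim_out t x).1.2 else [::].
Definition sim_qry t := if sc t is Some x then (sim_out t x).2 else None.
Definition sim_msrc t := if sc t is Some x then head_src (inbox_at t x) else (0, 0).

(* The oracle's responses are defined from the run without them; [first_query] does not
   look at responses. *)
Definition sim_run0 : run A :=
  Run sc sim_ev (fun t => scfg (sim t)) sim_sent sim_qry sim_msrc (fun _ => None).

Definition sim_resp (k : nat) : option (nat * bool) :=
  match excluded_middle_informative
          (exists tb : nat * bool, first_query sim_run0 q k tb.1 tb.2) with
  | left H => let tb := proj1_sig (constructive_indefinite_description _ H) in
              Some (tb.1.+1, tb.2)
  | right _ => None end.

Definition sim_run : run A :=
  Run sc sim_ev (fun t => scfg (sim t)) sim_sent sim_qry sim_msrc sim_resp.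

Lemma scfg_tick t s : scfg (tick t s) = scfg s.
Proof. by rewrite /tick; case: (t == R). Qed.

Lemma answered_tick t s : answered (tick t s) = answered s.
Proof. by rewrite /tick; case: (t == R). Qed.

Lemma first_query_uniq k t1 t2 b1 b2 :
  first_query sim_run0 q k t1 b1 -> first_query sim_run0 q k t2 b2 -> t1 = t2 /\ b1 = b2.
Proof.
move=> [E1 [Q1 H1]] [E2 [Q2 H2]].
have tt : t1 = t2.
  by case: (ltngtP t1 t2) => // lt; [case: (H2 _ lt E1 b1) | case: (H1 _ lt E2 b2)].
by subst t2; split => //; move: Q1; rewrite Q2 => [[]].
Qed.

Lemma sim_resp_first_query k t b : first_query sim_run0 q k t b -> sim_resp k = Some (t.+1, b).
Proof.
move=> H; rewrite /sim_resp; case: excluded_middle_informative => [H'|nH]; last first.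
  by case: nH; exists (t, b).
by case: constructive_indefinite_description => [[t' b']] /= /(first_query_uniq H) [-> ->].
Qed.

Lemma sim_resp_some k tau d : sim_resp k = Some (tau, d) ->
  exists t, first_query sim_run0 q k t d /\ tau = t.+1.
Proof.
rewrite /sim_resp; case: excluded_middle_informative => [H'|nH] //.
by case: constructive_indefinite_description => [[t' b']] /= H [<- <-]; exists t'.
Qed.

Definition pending_for x s := inbox s x ++ (if x == q then held s else [::]).

Lemma pending_for_tick t s x : pending_for x (tick t s) = pending_for x s.
Proof.
rewrite /pending_for /tick; case: (t == R) => //=.
by case: (x == q) => //; rewrite cats0.
Qed.

Definition msg_id (it : pending) := if it is Pmsg t i _ _ then Some (t, i) else None.
Definition msg_ids (l : seq pending) := pmap msg_id l.
Definition resp_key (it : pending) := if it is Presp k _ then Some k else None.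
Definition resp_keys (l : seq pending) := pmap resp_key l.

Lemma msg_ids_cat l1 l2 : msg_ids (l1 ++ l2) = msg_ids l1 ++ msg_ids l2.
Proof. exact: pmap_cat. Qed.

Lemma resp_keys_cat l1 l2 : resp_keys (l1 ++ l2) = resp_keys l1 ++ resp_keys l2.
Proof. exact: pmap_cat. Qed.

Lemma msg_idsP l id :
  reflect (exists t i s m, List.In (Pmsg t i s m) l /\ id = (t, i)) (id \in msg_ids l).
Proof.
apply: (iffP idP).
  elim: l => [|[t i s m|k b] l IH] //=; rewrite /msg_ids /=.
    rewrite inE => /orP [/eqP ->|/IH [t' [i' [s' [m' [h ->]]]]]].
      by exists t, i, s, m; split; [left|].
    by exists t', i', s', m'; split; [right|].
  by move=> /IH [t' [i' [s' [m' [h ->]]]]]; exists t', i', s', m'; split; [right|].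
case=> t [i [s [m [+ ->]]]]; elim: l => [|it l IH] //= [->|/IH h]; rewrite /msg_ids /=.
  by rewrite inE eqxx.
by case: it => //= *; rewrite inE h orbT.
Qed.

Lemma resp_keysP l k : reflect (exists b, List.In (Presp k b) l) (k \in resp_keys l).
Proof.
apply: (iffP idP).
  elim: l => [|[t i s m|k' b] l IH] //=; rewrite /resp_keys /=.
    by move=> /IH [b h]; exists b; right.
  rewrite inE => /orP [/eqP ->|/IH [b' h]]; first by exists b; left.
  by exists b'; right.
case=> b; elim: l => [|it l IH] //= [->|/IH h]; rewrite /resp_keys /=.
  by rewrite inE eqxx.
by case: it => //= *; rewrite inE h orbT.
Qed.

Lemma mem_outbox t i x P ms it : List.In it (outbox t i x P ms) ->
  exists j m d, it = Pmsg t (i + j) x m /\ onth ms j = Some (d, m) /\ P d.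
Proof.
elim: ms i => [|[d m] ms IH] i //=.
case: ifP => Pd /=; first case=> [<-|]; first by exists 0, m, d; rewrite addn0.
all: by move=> /IH [j [m' [d' [-> [h1 h2]]]]]; exists j.+1, m', d'; rewrite addnS.
Qed.

Lemma outbox_complete t i x (P : pred 'I_n) ms j d m : onth ms j = Some (d, m) -> P d ->
  List.In (Pmsg t (i + j) x m) (outbox t i x P ms).
Proof.
elim: ms i j => [|[d' m'] ms IH] i [|j] //=.
  by case=> <- <- ->; rewrite addn0; left.
move=> /IH h /h; rewrite -addSnnS => {}h.
by case: ifP => _ //=; right.
Qed.

Lemma resp_keys_outbox t i x P ms : resp_keys (outbox t i x P ms) = [::].
Proof. by elim: ms i => [|[d m] ms IH] i //=; case: (P d) => //=; apply: IH. Qed.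

Lemma msg_ids_outbox t i x P ms :
  (forall id, id \in msg_ids (outbox t i x P ms) -> id.1 = t /\ i <= id.2) /\
  uniq (msg_ids (outbox t i x P ms)).
Proof.
elim: ms i => [|[d m] ms IH] i //=.
have [h1 h2] := IH i.+1.
case: ifP => _ //=; last by split => // id /h1 [-> /ltnW].
split; first by move=> id; rewrite inE => /orP [/eqP -> //|/h1 [-> /ltnW]].
by rewrite h2 andbT; apply/negP => /h1 [_] /=; rewrite ltnn.
Qed.

Lemma outbox_pred0 t i x (P : pred 'I_n) ms : P =1 pred0 -> outbox t i x P ms = [::].
Proof. by move=> H; elim: ms i => [|[d m] ms IH] i //=; rewrite H /=. Qed.

Lemma sim_busy t y : sc t = Some y -> sim t.+1 =
  SState (fun z => if z == y then (sim_out t y).1.1 else scfg (sim t) z)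
     (fun z => if z == y then behead (inbox_at t y) ++ outbox t 0 y (pred1 y) (sim_out t y).1.2 ++
                              oracle_reply y (sim_out t y).2 (answered (sim t))
               else inbox_at t z)
     (held (sim_pre t) ++ outbox t 0 y (fun d => (y == p) && (d == q)) (sim_out t y).1.2)
     (record_query y (sim_out t y).2 (answered (sim t))).
Proof.
move=> E; rewrite /= E /sim_step /sim_out /inbox_at -/(sim_pre t) /sim_pre scfg_tick answered_tick.
by case: (step _ _ _) => [[s' ms] qo].
Qed.

Lemma sim_idle t : sc t = None -> sim t.+1 = sim_pre t.
Proof. by move=> E; rewrite /= E. Qed.

Lemma oracle_reply_uniq y qo K :
  msg_ids (oracle_reply y qo K) = [::] /\ uniq (resp_keys (oracle_reply y qo K)).
Proof.
by rewrite /oracle_reply; case: (y == q) => //; case: qo => [[k b]|] //; case: (k \in K).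
Qed.

Definition fresh_ok t y x it :=
  match it with
  | Pmsg t' i s m => t' = t /\ s = y /\ onth (sim_out t y).1.2 i = Some (x, m)
  | Presp k b => [/\ x = q, y = q, (sim_out t y).2 = Some (k, b) & k \notin answered (sim t)]
  end.

(* A step of [y] consumes the head of [y]'s inbox and appends fresh items [v] somewhere in
   the middle of the pending list of [x] (before the items [w] held for [q]). *)
Lemma pending_for_step t y x : sc t = Some y -> exists u v w,
  [/\ pending_for x (sim t) = (if x == y then take 1 (inbox_at t x) else [::]) ++ u ++ w,
      pending_for x (sim t.+1) = u ++ v ++ w,
      (forall it, List.In it v -> fresh_ok t y x it),
      uniq (msg_ids v) & uniq (resp_keys v)].
Proof.
move=> E; rewrite -(pending_for_tick t (sim t)) -/(sim_pre t) (sim_busy E) /pending_for /=.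
set ms := (sim_out t y).1.2; set qo := (sim_out t y).2.
have [_ uniq_ms] := msg_ids_outbox t 0 y (pred1 y) ms.
have [ids_reply uniq_reply] := oracle_reply_uniq y qo (answered (sim t)).
case: (eqVneq x y) => [exy|nxy].
  subst x.
  exists (behead (inbox_at t y)).
  exists (outbox t 0 y (pred1 y) ms ++ oracle_reply y qo (answered (sim t))).
  exists (if y == q then held (sim_pre t) ++ outbox t 0 y (fun d => (y == p) && (d == q)) ms
          else [::]).
  split.
  - rewrite catA -drop1 cat_take_drop /inbox_at; case: eqP => // ey; subst y.
    by rewrite outbox_pred0 ?cats0 // => d; rewrite /= eq_sym (negbTE pq).
  - by rewrite !catA.
  - move=> it H; case: (List.in_app_or _ _ _ H) => [/mem_outbox [j [m [d [-> [h /eqP e]]]]]|].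
      by subst d.
    rewrite /oracle_reply; case: eqP => // ey.
    by case Eq: qo => [[k b]|] //; case: ifP => //= kn [] // <- /=; rewrite kn -Eq.
  - by rewrite msg_ids_cat ids_reply cats0.
  - by rewrite resp_keys_cat resp_keys_outbox.
case: (eqVneq x q) => [exq|nxq]; last by exists (inbox_at t x), [::], [::]; rewrite /inbox_at.
subst x; exists (inbox_at t q ++ held (sim_pre t)).
exists (outbox t 0 y (fun d => (y == p) && (d == q)) ms), [::]; split.
- by rewrite cats0.
- by rewrite !cats0 catA.
- by move=> it /mem_outbox [j [m [d [-> [h /andP [_ /eqP e]]]]]]; subst d.
- by have [] := msg_ids_outbox t 0 y (fun d => (y == p) && (d == q)) ms.
- by rewrite resp_keys_outbox.
Qed.

Definition pending_ok t x it :=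
  match it with
  | Pmsg t' i s m => t' < t /\ sc t' = Some s /\ onth (sim_sent t') i = Some (x, m)
  | Presp k b => x = q /\ exists tk, tk < t /\ first_query sim_run0 q k tk b
  end.
Definition delivered_msg t1 id := (exists s m, sim_ev t1 = EvMsg s m) /\ sim_msrc t1 = id.
Definition delivered_resp t1 x k := sc t1 = Some x /\ exists b, sim_ev t1 = EvResp _ _ k b.
Definition queried k t0 := sc t0 = Some q /\ exists b, sim_qry t0 = Some (k, b).

Record sim_inv t : Prop := {
  inv_pending_ok : forall x it, List.In it (pending_for x (sim t)) -> pending_ok t x it;
  inv_ids_uniq : forall x, uniq (msg_ids (pending_for x (sim t)));
  inv_keys_uniq : forall x, uniq (resp_keys (pending_for x (sim t)));
  inv_ids_fresh : forall x id t1, id \in msg_ids (pending_for x (sim t)) -> t1 < t ->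
    ~ delivered_msg t1 id;
  inv_keys_fresh : forall x k t1, k \in resp_keys (pending_for x (sim t)) -> t1 < t ->
    ~ delivered_resp t1 x k;
  inv_answered : forall k, k \in answered (sim t) <-> exists t0, t0 < t /\ queried k t0;
  inv_keys_answered : forall k, k \in resp_keys (pending_for q (sim t)) -> k \in answered (sim t);
  inv_delivered_answered : forall t1 k, t1 < t -> delivered_resp t1 q k -> k \in answered (sim t);
  inv_delivered_past : forall t1 id, t1 < t -> delivered_msg t1 id -> id.1 < t1 }.

Lemma pending_ok_S t x it : pending_ok t x it -> pending_ok t.+1 x it.
Proof.
case: it => [t' i s m|k b] /=; first by case=> h ?; split => //; apply: ltnW.
by case=> -> [tk [h ?]]; split => //; exists tk; split => //; apply: ltnW.
Qed.

Lemma in_pending_for_inbox t x it :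
  List.In it (inbox_at t x) -> List.In it (pending_for x (sim t)).
Proof.
by rewrite -(pending_for_tick t (sim t)) /pending_for => h; apply: List.in_or_app; left.
Qed.

Lemma head_in_pending_for t x it l :
  inbox_at t x = it :: l -> List.In it (pending_for x (sim t)).
Proof. by move=> Eq; apply: in_pending_for_inbox; rewrite Eq; left. Qed.

Lemma delivered_msg_head t id : delivered_msg t id -> exists y t' i s m l,
  [/\ sc t = Some y, inbox_at t y = Pmsg t' i s m :: l & id = (t', i)].
Proof.
rewrite /delivered_msg /sim_ev /sim_msrc; case Es: (sc t) => [y|]; last by case=> [[? [?]]].
case Eq: (inbox_at t y) => [|[t' i s m|k b] l] /=; try by case=> [[? [?]]].
by case=> _ <-; exists y, t', i, s, m, l.
Qed.

Lemma delivered_resp_head t x k : delivered_resp t x k -> exists b l, inbox_at t x = Presp k b :: l.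
Proof.
rewrite /delivered_resp /sim_ev; case=> -> [b].
by case Eq: (inbox_at t x) => [|[t' i s m|k' b'] l] //= [-> ->]; exists b, l.
Qed.

Lemma record_query_sub y qo K k : k \in K -> k \in record_query y qo K.
Proof.
rewrite /record_query => h; case: (y == q) => //; case: qo => [[k' b]|] //.
by case: ifP => // _; rewrite mem_rcons inE h orbT.
Qed.

Lemma record_query_new y qo K k b : y = q -> qo = Some (k, b) -> k \in record_query y qo K.
Proof.
by move=> -> ->; rewrite /record_query eqxx; case: ifP => // _; rewrite mem_rcons inE eqxx.
Qed.

Lemma record_queryP y qo K k :
  k \in record_query y qo K -> k \in K \/ (y = q /\ exists b, qo = Some (k, b)).
Proof.
rewrite /record_query; case: eqP => [->|_]; last by left.
case: qo => [[k' b]|]; last by left.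
case: ifP => _; first by left.
by rewrite mem_rcons inE => /orP [/eqP ->|]; [right; split => //; exists b | left].
Qed.

Lemma ltnS_split t1 t : t1 < t.+1 -> t1 = t \/ t1 < t.
Proof. by rewrite ltnS leq_eqVlt => /orP [/eqP ->|]; [left|right]. Qed.

Lemma sim_inv0 : sim_inv 0.
Proof.
have Ep x : pending_for x (sim 0) = [::] by rewrite /pending_for /=; case: (x == q).
constructor => [x it|x|x|x id t1|x k t1|k|k|t1 k|t1 id]; rewrite ?Ep //.
by split => // [[t0 []]].
Qed.

Lemma sim_inv_idle t : sim_inv t -> sc t = None -> sim_inv t.+1.
Proof.
move=> I E.
have Ep x : pending_for x (sim t.+1) = pending_for x (sim t).
  by rewrite (sim_idle E) pending_for_tick.
have Ek : answered (sim t.+1) = answered (sim t) by rewrite (sim_idle E) answered_tick.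
have nm id : ~ delivered_msg t id by rewrite /delivered_msg /sim_ev E => [[[? [?]]]].
have nr x k : ~ delivered_resp t x k by rewrite /delivered_resp E => [[]].
constructor.
- by move=> x it; rewrite Ep => h; apply: pending_ok_S; apply: (inv_pending_ok I h).
- by move=> x; rewrite Ep; apply: (inv_ids_uniq I).
- by move=> x; rewrite Ep; apply: (inv_keys_uniq I).
- move=> x id t1; rewrite Ep => h /ltnS_split [->|]; [apply: nm | exact: (inv_ids_fresh I) h].
- move=> x k t1; rewrite Ep => h /ltnS_split [->|]; [apply: nr | exact: (inv_keys_fresh I) h].
- move=> k; rewrite Ek (inv_answered I); split => [[t0 [h1 h2]]|[t0 [/ltnS_split [e|h1] h2]]].
  + by exists t0; split => //; apply: ltnW.
  + by subst t0; move: h2; rewrite /queried E => [[]].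
  + by exists t0.
- by move=> k; rewrite Ep Ek; apply: (inv_keys_answered I).
- by move=> t1 k; rewrite Ek => /ltnS_split [->|h]; [move/nr | apply: (inv_delivered_answered I)].
- by move=> t1 id /ltnS_split [->|h]; [move/nm | apply: (inv_delivered_past I)].
Qed.

Section InvariantStep.
Variables (t : nat) (y : 'I_n).
Hypotheses (I : sim_inv t) (E : sc t = Some y).

Lemma answered_S : answered (sim t.+1) = record_query y (sim_out t y).2 (answered (sim t)).
Proof. by rewrite (sim_busy E). Qed.

Lemma answered_step k : k \in answered (sim t) -> k \in answered (sim t.+1).
Proof. by rewrite answered_S; apply: record_query_sub. Qed.

Lemma head_pending_ok it l : inbox_at t y = it :: l -> pending_ok t y it.
Proof. by move=> Eq; apply: (inv_pending_ok I); apply: head_in_pending_for Eq. Qed.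

Lemma fresh_pending_ok x it : fresh_ok t y x it -> pending_ok t.+1 x it.
Proof.
case: it => [t' i s m|k b] /=.
  by case=> -> [-> h]; split => //; split => //; rewrite /sim_sent E.
case=> xq yq hq kn; split => //; exists t; split => //.
subst y; split => //; split; first by rewrite /= /sim_qry E.
move=> t0 lt0 E0 b0 hq0; move/negP: kn; apply; apply/(inv_answered I); exists t0; split => //.
by split => //; exists b0.
Qed.

Section Decomposition.
Variables (x : 'I_n) (u w : seq pending).
Hypothesis Ex : pending_for x (sim t) = (if x == y then take 1 (inbox_at t x) else [::]) ++ u ++ w.

Lemma in_pending_rest it : List.In it (u ++ w) -> List.In it (pending_for x (sim t)).
Proof. by rewrite Ex => h; apply: List.in_or_app; right. Qed.

Lemma pending_rest_uniq : uniq (msg_ids (u ++ w)) /\ uniq (resp_keys (u ++ w)).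
Proof.
have := inv_ids_uniq I x; have := inv_keys_uniq I x.
rewrite Ex msg_ids_cat resp_keys_cat !cat_uniq.
by move=> /and3P [_ _ ->] /and3P [_ _ ->].
Qed.

(* The item consumed at time [t] is the head of [y]'s inbox, which is not in [u ++ w]. *)
Lemma rest_ids_fresh id t1 :
  id \in msg_ids (u ++ w) -> t1 < t.+1 -> ~ delivered_msg t1 id.
Proof.
move=> hid /ltnS_split [->|lt]; last first.
  apply: (@inv_ids_fresh t I x id t1 _ lt).
  by rewrite Ex !msg_ids_cat !mem_cat -mem_cat -msg_ids_cat hid orbT.
case/delivered_msg_head=> y' [t2 [i2 [s2 [m2 [l [E' Eq e3]]]]]].
move: E'; rewrite E => [[ey]]; subst y' id.
have [t3 [i3 [s3 [m3 [hin [e4 e5]]]]]] := elimTF (msg_idsP _ _) hid; subst t3 i3.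
have [_ [_ o1]] := inv_pending_ok I (in_pending_rest hin).
have [_ [_ o2]] := head_pending_ok Eq.
move: o1; rewrite o2 => [[exy _]]; subst x.
by have := inv_ids_uniq I y; rewrite Ex eqxx Eq /= msg_ids_cat take0 /= hid.
Qed.

Lemma rest_keys_fresh k t1 :
  k \in resp_keys (u ++ w) -> t1 < t.+1 -> ~ delivered_resp t1 x k.
Proof.
move=> hk /ltnS_split [->|lt]; last first.
  apply: (@inv_keys_fresh t I x k t1 _ lt).
  by rewrite Ex !resp_keys_cat !mem_cat -mem_cat -resp_keys_cat hk orbT.
move=> dr; have [b [l Eq]] := delivered_resp_head dr.
case: dr => E' _; move: E'; rewrite E => [[ey]]; subst x.
by have := inv_keys_uniq I y; rewrite Ex eqxx Eq /= take0 /= hk.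
Qed.

End Decomposition.

Lemma pending_ok_step x it : List.In it (pending_for x (sim t.+1)) -> pending_ok t.+1 x it.
Proof.
have [u [v [w [e1 -> hv _ _]]]] := pending_for_step x E.
have old it' : List.In it' (u ++ w) -> pending_ok t.+1 x it'.
  by move=> h; apply: pending_ok_S; apply: (inv_pending_ok I); apply: (in_pending_rest e1).
move=> /List.in_app_iff [h|/List.in_app_iff [h|h]].
- by apply: old; apply: List.in_or_app; left.
- exact: fresh_pending_ok (hv _ h).
- by apply: old; apply: List.in_or_app; right.
Qed.

Lemma ids_uniq_step x : uniq (msg_ids (pending_for x (sim t.+1))).
Proof.
have [u [v [w [e1 -> hv uv _]]]] := pending_for_step x E.
have [ou _] := pending_rest_uniq e1.
rewrite !msg_ids_cat uniq_catCA -msg_ids_cat cat_uniq uv ou /= andbT.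
apply/hasPn => id /msg_idsP [t' [i [s [m [hin ->]]]]].
apply/negP => /msg_idsP [t'' [i' [s' [m' [hin' [e _]]]]]].
have [e' _] := hv _ hin'; subst t'' t'.
by have [] := inv_pending_ok I (in_pending_rest e1 hin); rewrite ltnn.
Qed.

Lemma keys_uniq_step x : uniq (resp_keys (pending_for x (sim t.+1))).
Proof.
have [u [v [w [e1 -> hv _ ur]]]] := pending_for_step x E.
have [_ ou] := pending_rest_uniq e1.
rewrite !resp_keys_cat uniq_catCA -resp_keys_cat cat_uniq ur ou /= andbT.
apply/hasPn => k /resp_keysP [b' hin'].
apply/negP => /resp_keysP [b hin].
have [xq yq _ kn] := hv _ hin; subst x; move/negP: kn; apply.
by apply: (inv_keys_answered I); apply/resp_keysP; exists b'; exact: (in_pending_rest e1 hin').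
Qed.

Lemma ids_fresh_step x id t1 :
  id \in msg_ids (pending_for x (sim t.+1)) -> t1 < t.+1 -> ~ delivered_msg t1 id.
Proof.
have [u [v [w [e1 -> hv _ _]]]] := pending_for_step x E.
rewrite !msg_ids_cat !mem_cat => /or3P [hid|hid|hid].
- by apply: (rest_ids_fresh e1); rewrite msg_ids_cat mem_cat hid.
- have [t3 [i3 [s3 [m3 [hin ->]]]]] := elimTF (msg_idsP _ _) hid.
  have [-> _] := hv _ hin; move=> /ltnS_split [->|lt].
    case/delivered_msg_head=> y' [t2 [i2 [s2 [m2 [l [E' Eq [e3 _]]]]]]].
    move: E'; rewrite E => [[ey]]; subst y' t2.
    by have [] := head_pending_ok Eq; rewrite ltnn.
  by move=> /(inv_delivered_past I lt) /=; rewrite ltnNge (ltnW lt).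
- by apply: (rest_ids_fresh e1); rewrite msg_ids_cat mem_cat hid orbT.
Qed.

Lemma keys_fresh_step x k t1 :
  k \in resp_keys (pending_for x (sim t.+1)) -> t1 < t.+1 -> ~ delivered_resp t1 x k.
Proof.
have [u [v [w [e1 -> hv _ _]]]] := pending_for_step x E.
rewrite !resp_keys_cat !mem_cat => /or3P [hk|hk|hk].
- by apply: (rest_keys_fresh e1); rewrite resp_keys_cat mem_cat hk.
- have [b hin] := elimTF (resp_keysP _ _) hk.
  have [xq yq _ kn] := hv _ hin; subst x.
  move=> /ltnS_split [->|lt] dr; move/negP: kn; apply; last exact: (inv_delivered_answered I lt dr).
  have [b' [l Eq]] := delivered_resp_head dr.
  by apply: (inv_keys_answered I); apply/resp_keysP; exists b'; apply: head_in_pending_for Eq.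
- by apply: (rest_keys_fresh e1); rewrite resp_keys_cat mem_cat hk orbT.
Qed.

Lemma answered_stepP k : k \in answered (sim t.+1) <-> exists t0, t0 < t.+1 /\ queried k t0.
Proof.
rewrite answered_S; split.
  move=> /record_queryP [hk|[yq [b hqo]]].
    by have [t0 [lt h]] := (inv_answered I k).1 hk; exists t0; split => //; apply: ltnW.
  by exists t; split => //; split; [rewrite E yq | exists b; rewrite /sim_qry E].
move=> [t0 [/ltnS_split [e|lt] h]]; last first.
  by apply: record_query_sub; apply/(inv_answered I); exists t0.
subst t0; case: h => E' [b hb]; move: E'; rewrite E => [[yq]].
by apply: (@record_query_new _ _ _ k b yq); move: hb; rewrite /sim_qry E.
Qed.

Lemma keys_answered_step k :
  k \in resp_keys (pending_for q (sim t.+1)) -> k \in answered (sim t.+1).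
Proof.
have [u [v [w [e1 -> hv _ _]]]] := pending_for_step q E.
have old : k \in resp_keys (u ++ w) -> k \in answered (sim t.+1).
  move=> hk; apply: answered_step; apply: (inv_keys_answered I).
  by rewrite e1 !resp_keys_cat !mem_cat -mem_cat -resp_keys_cat hk orbT.
rewrite !resp_keys_cat !mem_cat => /or3P [hk|hk|hk].
- by apply: old; rewrite resp_keys_cat mem_cat hk.
- have [b hin] := elimTF (resp_keysP _ _) hk; have [_ yq hq _] := hv _ hin.
  by rewrite answered_S; apply: record_query_new yq hq.
- by apply: old; rewrite resp_keys_cat mem_cat hk orbT.
Qed.

Lemma delivered_answered_step t1 k :
  t1 < t.+1 -> delivered_resp t1 q k -> k \in answered (sim t.+1).
Proof.
move=> /ltnS_split [->|lt] dr; apply: answered_step; last exact: (inv_delivered_answered I lt dr).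
have [b' [l Eq]] := delivered_resp_head dr.
by apply: (inv_keys_answered I); apply/resp_keysP; exists b'; apply: head_in_pending_for Eq.
Qed.

Lemma delivered_past_step t1 id : t1 < t.+1 -> delivered_msg t1 id -> id.1 < t1.
Proof.
move=> /ltnS_split [->|lt] dm; last exact: (inv_delivered_past I lt dm).
have [y' [t2 [i2 [s2 [m2 [l [E' Eq ->]]]]]]] := delivered_msg_head dm.
move: E'; rewrite E => [[ey]]; subst y'.
by have [] := head_pending_ok Eq.
Qed.

End InvariantStep.

Lemma sim_invariant t : sim_inv t.
Proof.
elim: t => [|t I]; first exact: sim_inv0.
case E: (sc t) => [y|]; last exact: sim_inv_idle.
constructor.
- exact: (pending_ok_step I E).
- exact: (ids_uniq_step I E).
- exact: (keys_uniq_step I E).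
- exact: (ids_fresh_step I E).
- exact: (keys_fresh_step I E).
- exact: (answered_stepP I E).
- exact: (keys_answered_step I E).
- exact: (delivered_answered_step I E).
- exact: (delivered_past_step I E).
Qed.

Lemma inbox_tick t s x : exists e, inbox (tick t s) x = inbox s x ++ e.
Proof.
rewrite /tick; case: (t == R); last by exists [::]; rewrite cats0.
by rewrite /release /=; case: (x == q); [exists (held s) | exists [::]; rewrite cats0].
Qed.

Lemma in_inbox_at t x it : List.In it (inbox (sim t) x) -> List.In it (inbox_at t x).
Proof.
rewrite /inbox_at /sim_pre; have [e ->] := inbox_tick t (sim t) x.
by move=> h; apply: List.in_or_app; left.
Qed.

Lemma inbox_at_grow t x : sc t <> Some x -> exists e, inbox_at t.+1 x = inbox_at t x ++ e.
Proof.
move=> ne; rewrite {1}/inbox_at /sim_pre; have [e ->] := inbox_tick t.+1 (sim t.+1) x.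
exists e; congr (_ ++ _).
case E: (sc t) => [y|]; last by rewrite (sim_idle E).
by rewrite (sim_busy E) /=; case: eqP => // exy; case: ne; rewrite E exy.
Qed.

Lemma inbox_at_step t x : sc t = Some x -> exists e, inbox_at t.+1 x = behead (inbox_at t x) ++ e.
Proof.
move=> E; rewrite {1}/inbox_at /sim_pre; have [e ->] := inbox_tick t.+1 (sim t.+1) x.
by rewrite (sim_busy E) /= eqxx -catA; eexists.
Qed.

Lemma inbox_at_grow_upto x t d : (forall j, t <= j < t + d -> sc j <> Some x) ->
  exists e, inbox_at (t + d) x = inbox_at t x ++ e.
Proof.
elim: d => [|d IH] H; first by exists [::]; rewrite addn0 cats0.
have [e1 E1] : exists e, inbox_at (t + d) x = inbox_at t x ++ e.
  by apply: IH => j /andP [h1 h2]; apply: H; rewrite h1 addnS ltnS ltnW.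
have [|e2 E2] := @inbox_at_grow (t + d) x; first by apply: H; rewrite leq_addr addnS ltnS /=.
by exists (e1 ++ e2); rewrite addnS E2 E1 catA.
Qed.

Lemma next_turn x t : (exists t', t <= t' /\ sc t' = Some x) ->
  exists tm, [/\ t <= tm, sc tm = Some x & exists e, inbox_at tm x = inbox_at t x ++ e].
Proof.
move=> [t0 [h0 e0]].
have ex : exists t', (t <= t') && (sc t' == Some x) by exists t0; rewrite h0 e0 eqxx.
case: (ex_minnP ex) => tm /andP [le /eqP Etm] Hmin.
exists tm; split => //; rewrite -(subnKC le); apply: inbox_at_grow_upto => j.
rewrite (subnKC le) => /andP [h1 h2] Ej.
by have := Hmin j; rewrite h1 Ej eqxx leqNgt h2 => /(_ isT).
Qed.

(* Inboxes are FIFO queues, so an item reaches the head after at most as many turns of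
   its owner as there are items before it. *)
Lemma inbox_delivered x it t : (forall t, exists t', t <= t' /\ sc t' = Some x) ->
  List.In it (inbox_at t x) ->
  exists t', [/\ t <= t', sc t' = Some x & exists l, inbox_at t' x = it :: l].
Proof.
move=> fair H; have [l1 [l2 EQ]] := List.in_split _ _ H; clear H.
elim: l1 t l2 EQ => [|a l1 IH] t l2 EQ; have [tm [le Etm [e Ee]]] := next_turn (fair t).
  by exists tm; split => //; exists (l2 ++ e); rewrite Ee EQ.
have [e' Ee'] := inbox_at_step Etm.
have [|t' [h1 h2 h3]] := IH tm.+1 (l2 ++ e ++ e'); first by rewrite Ee' Ee EQ /= -!catA.
by exists t'; split => //; apply: leq_trans le (ltnW h1).
Qed.

Lemma inbox_head_ok t x it l : inbox_at t x = it :: l -> pending_ok t x it.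
Proof.
by move=> Eq; apply: (inv_pending_ok (sim_invariant t)); apply: head_in_pending_for Eq.
Qed.

Lemma sim_ev_msg t x s m : sc t = Some x -> sim_ev t = EvMsg s m ->
  exists t' i l, inbox_at t x = Pmsg t' i s m :: l /\ sim_msrc t = (t', i).
Proof.
move=> E; rewrite /sim_ev /sim_msrc E.
by case: (inbox_at t x) => [|[t' i s' m'|k b] l] //= [-> ->]; exists t', i, l.
Qed.

Lemma sim_ev_resp t x k d : sc t = Some x -> sim_ev t = EvResp _ _ k d ->
  exists l, inbox_at t x = Presp k d :: l.
Proof.
move=> E; rewrite /sim_ev E.
by case: (inbox_at t x) => [|[t' i s' m'|k' b] l] //= [-> ->]; exists l.
Qed.

Section Admissibility.
Variables (F : failure_pattern n) (f : nat).
Hypothesis sc_alive : forall t x, sc t = Some x -> x \notin F t.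
Hypothesis sc_pq : forall t x, sc t = Some x -> x = p \/ x = q.
Hypothesis sc_fair : forall x, correct F x -> forall t, exists t', t <= t' /\ sc t' = Some x.
Hypothesis correct_pq : forall x, correct F x -> x = p \/ x = q.
Hypothesis p_before_release : forall t, sc t = Some p -> correct F q -> t < R.
Hypothesis q_silent : correct F p -> forall t, sc t <> Some q.
Hypothesis two_needed : 2 <= n - f.

Lemma sim_msg_source t x s m : sched sim_run t = Some x -> ev sim_run t = EvMsg s m ->
  (msrc sim_run t).1 < t /\ sched sim_run (msrc sim_run t).1 = Some s /\
  onth (sent sim_run (msrc sim_run t).1) (msrc sim_run t).2 = Some (x, m).
Proof.
move=> /= E Ee; have [t' [i [l [EQ ->]]]] := sim_ev_msg E Ee.
exact: inbox_head_ok EQ.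
Qed.

Lemma sim_msg_once t1 t2 x1 x2 s1 s2 m1 m2 :
  sched sim_run t1 = Some x1 -> ev sim_run t1 = EvMsg s1 m1 ->
  sched sim_run t2 = Some x2 -> ev sim_run t2 = EvMsg s2 m2 ->
  msrc sim_run t1 = msrc sim_run t2 -> t1 = t2.
Proof.
have once a b xb sa sb ma mb : a < b -> sim_ev a = EvMsg sa ma ->
    sc b = Some xb -> sim_ev b = EvMsg sb mb -> sim_msrc a = sim_msrc b -> False.
  move=> lt Eea Eb Eeb Es.
  have [t' [i [l [EQ Em]]]] := sim_ev_msg Eb Eeb.
  have hid : (t', i) \in msg_ids (pending_for xb (sim b)).
    by apply/msg_idsP; exists t', i, sb, mb; split=> //; apply: head_in_pending_for EQ.
  by apply: (inv_ids_fresh (sim_invariant b) hid lt); split; [exists sa, ma | rewrite Es Em].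
move=> /= E1 Ee1 E2 Ee2 Es.
by case: (ltngtP t1 t2) => // lt; [case: (once _ _ _ _ _ _ _ lt Ee1 E2 Ee2 Es)
                                  | case: (once _ _ _ _ _ _ _ lt Ee2 E1 Ee1 (esym Es))].
Qed.

Lemma sim_msg_reaches_inbox t' i y x m : sc t' = Some y -> onth (sim_sent t') i = Some (x, m) ->
  correct F x -> exists t0, List.In (Pmsg t' i y m) (inbox_at t0 x).
Proof.
move=> E Es cx; rewrite /sim_sent E in Es.
case: (eqVneq x y) => [exy|ne].
  subst y.
  exists t'.+1; apply: in_inbox_at; rewrite (sim_busy E) /= eqxx.
  apply: List.in_or_app; right; apply: List.in_or_app; left.
  by have := @outbox_complete t' 0 x (pred1 x) _ i x m Es (eqxx x); rewrite add0n.
have [ex|ex] := correct_pq cx; have [ey|ey] := sc_pq E; subst x y; rewrite ?eqxx // in ne.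
  by case: (q_silent cx E).
have lt := p_before_release E cx.
have held_until d : t'.+1 + d <= R -> List.In (Pmsg t' i p m) (held (sim (t'.+1 + d))).
  elim: d => [_|d IH hle].
    rewrite addn0 (sim_busy E) /=; apply: List.in_or_app; right.
    by have := @outbox_complete t' 0 p (fun d => (p == p) && (d == q)) _ i q m Es;
      rewrite add0n !eqxx => /(_ isT).
  have hj : t'.+1 + d < R by rewrite addnS in hle.
  have hp : sim_pre (t'.+1 + d) = sim (t'.+1 + d).
    by rewrite /sim_pre /tick; case: eqP => // e; rewrite e ltnn in hj.
  rewrite addnS; case Ej: (sc (t'.+1 + d)) => [z|].
    by rewrite (sim_busy Ej) /= hp; apply: List.in_or_app; left; apply: IH; apply: ltnW.
  by rewrite (sim_idle Ej) hp; apply: IH; apply: ltnW.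
have := held_until (R - t'.+1); rewrite subnKC // => /(_ (leqnn _)) hR.
by exists R; rewrite /inbox_at /sim_pre /tick eqxx /= eqxx; apply: List.in_or_app; right.
Qed.

Lemma sim_reliable t' y i x m :
  sched sim_run t' = Some y -> onth (sent sim_run t') i = Some (x, m) -> correct F x ->
  exists t, sched sim_run t = Some x /\ ev sim_run t = EvMsg y m /\ msrc sim_run t = (t', i).
Proof.
move=> /= E Es cx; have [t0 Hin] := sim_msg_reaches_inbox E Es cx.
have [t1 [_ E1 [l EQ]]] := inbox_delivered (sc_fair cx) Hin.
by exists t1; rewrite /= /sim_ev /sim_msrc E1 EQ.
Qed.

(* [q]'s own query value is in [Cons_prob F V'] for every [V'] extending the queries. *)
Lemma sim_oracle_safe k tau d : resp sim_run k = Some (tau, d) ->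
  forall V' : 'I_n -> bool, (forall x b, queried_before sim_run x k tau b -> V' x = b) ->
  tprob (Consensus n f) F V' d.
Proof.
move=> /= /sim_resp_some [t [fq ->]] V' HV v Hv.
by have := HV q d; rewrite Hv => -> //; exists t.
Qed.

Lemma sim_resp_to_querier t x k d : sched sim_run t = Some x -> ev sim_run t = EvResp _ _ k d ->
  exists tau b, resp sim_run k = Some (tau, d) /\ tau <= t /\ queried_before sim_run x k tau b.
Proof.
move=> /= E Ee; have [l EQ] := sim_ev_resp E Ee.
have [-> [tk [lt fq]]] := inbox_head_ok EQ.
by exists tk.+1, d; split; [exact: sim_resp_first_query | split => //; exists tk].
Qed.

Lemma sim_resp_once t1 t2 x k d1 d2 :
  sched sim_run t1 = Some x -> ev sim_run t1 = EvResp _ _ k d1 ->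
  sched sim_run t2 = Some x -> ev sim_run t2 = EvResp _ _ k d2 -> t1 = t2.
Proof.
have once a b da db : a < b -> sc a = Some x -> sim_ev a = EvResp _ _ k da ->
    sc b = Some x -> sim_ev b = EvResp _ _ k db -> False.
  move=> lt Ea Eea Eb Eeb; have [l EQ] := sim_ev_resp Eb Eeb.
  have hk : k \in resp_keys (pending_for x (sim b)).
    by apply/resp_keysP; exists db; apply: head_in_pending_for EQ.
  by apply: (inv_keys_fresh (sim_invariant b) hk lt); split => //; exists da.
move=> /= E1 Ee1 E2 Ee2.
by case: (ltngtP t1 t2) => // lt; [case: (once _ _ _ _ lt E1 Ee1 E2 Ee2)
                                  | case: (once _ _ _ _ lt E2 Ee2 E1 Ee1)].
Qed.

(* At least [n - f >= 2] consultants are needed, so [q] is one of them. *)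
Lemma sim_oracle_live k (Qs : {set 'I_n}) : n - f <= #|Qs| ->
  (forall x, x \in Qs -> exists t b, first_query sim_run x k t b) ->
  exists tau d, resp sim_run k = Some (tau, d) /\
    forall x t b, correct F x -> first_query sim_run x k t b ->
      exists t', sched sim_run t' = Some x /\ ev sim_run t' = EvResp _ _ k d.
Proof.
move=> hQ Hall.
have qQ : q \in Qs.
  apply/negPn/negP => nq.
  have sub : Qs \subset [set p].
    apply/subsetP => x xQ; have [t [b [Ex _]]] := Hall x xQ.
    by case: (sc_pq Ex) => ex; subst x; [rewrite inE | rewrite xQ in nq].
  by have := subset_leq_card sub; rewrite cards1; lia.
have [tq [bq fq]] := Hall q qQ.
exists tq.+1, bq; split; first exact: sim_resp_first_query fq.
move=> x t b cx fqx; have [Eq [Qq Hq]] := fq; rewrite /= in Eq Qq.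
case: (correct_pq cx) => ex; subst x; first by case: (q_silent cx Eq).
have [et eb] := first_query_uniq fqx fq; subst t b.
have kn : k \notin answered (sim tq).
  apply/negP => /(inv_answered (sim_invariant tq)) [t0 [lt [E0 [b0 hb0]]]].
  exact: Hq t0 lt E0 b0 hb0.
have Hin : List.In (Presp k bq) (inbox_at tq.+1 q).
  apply: in_inbox_at; rewrite (sim_busy Eq) /= eqxx.
  apply: List.in_or_app; right; apply: List.in_or_app; right.
  have -> : (sim_out tq q).2 = Some (k, bq) by move: Qq; rewrite /sim_qry Eq.
  by rewrite /oracle_reply eqxx (negbTE kn); left.
have [t1 [_ E1 [l EQ]]] := inbox_delivered (sc_fair cx) Hin.
by exists t1; rewrite /= /sim_ev E1 EQ.
Qed.

Lemma sim_admissible : admissible (Consensus n f) F V sim_run.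
Proof.
split=> //; split.
  move=> t /=; case E: (sc t) => [x|]; last by rewrite /sim_sent /sim_qry /sim_ev E scfg_tick.
  have -> : sim_step t x (sim_pre t) = sim t.+1 by rewrite /= E.
  rewrite (sim_busy E) /sim_sent /sim_qry /sim_ev E /= -/(sim_out t x).
  case: (sim_out t x) => [[s' ms] qo] /=; rewrite eqxx; split; first exact: sc_alive E.
  by do 2 split => //; move=> x' /negbTE ->.
split; first exact: sim_msg_source.
split; first exact: sim_msg_once.
split; first exact: sim_reliable.
split; first exact: sim_oracle_safe.
split; first exact: sim_resp_to_querier.
split; first exact: sim_resp_once.
split; [exact: sim_oracle_live | exact: sc_fair].
Qed.

End Admissibility.
End Simulation.

Definition solo n (x : 'I_n) (s : nat) : nat -> option 'I_n :=
  fun t => if t < s then None else Some x.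

Definition handover n (p q : 'I_n) (s : nat) : nat -> option 'I_n :=
  fun t => if t < s then Some p else Some q.

Section Indistinguishability.
Variables (n : nat) (A : algorithm n) (p q : 'I_n).
Hypothesis pq : p != q.

Lemma inbox_tick_neq R t (s : sstate A) x : x != q -> inbox (tick q R t s) x = inbox s x.
Proof. by move=> ne; rewrite /tick; case: (t == R) => //=; rewrite (negbTE ne). Qed.

Lemma oracle_reply_neq x qo K : x != q -> oracle_reply A q x qo K = [::].
Proof. by move=> ne; rewrite /oracle_reply (negbTE ne). Qed.

Lemma record_query_neq x qo K : x != q -> record_query q x qo K = K.
Proof. by move=> ne; rewrite /record_query (negbTE ne). Qed.

Lemma tick_neq R t (s : sstate A) : t != R -> tick q R t s = s.
Proof. by rewrite /tick => /negbTE ->. Qed.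

Lemma tick_held_nil R t (s : sstate A) : held s = [::] ->
  inbox (tick q R t s) q = inbox s q /\ held (tick q R t s) = [::].
Proof. by move=> h; rewrite /tick; case: (t == R) => //=; rewrite eqxx h cats0. Qed.

Lemma handover_p_view T1 R1 R2 V1 V2 t : V1 p = V2 p -> t <= T1 ->
  let s1 := sim A p q (handover p q T1) R1 V1 t in
  let s2 := sim A p q (solo p 0) R2 V2 t in
  scfg s1 p = scfg s2 p /\ inbox s1 p = inbox s2 p.
Proof.
move=> hv; elim: t => [|t IH] lt; first by rewrite /= hv.
have [e1 e2] := IH (ltnW lt).
have E1 : handover p q T1 t = Some p by rewrite /handover lt.
have E2 : solo p 0 t = Some p by rewrite /solo ltn0.
rewrite (sim_busy _ _ _ _ _ E1) (sim_busy _ _ _ _ _ E2) /= eqxx.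
by rewrite /sim_out /inbox_at /sim_pre !inbox_tick_neq // e1 e2 !oracle_reply_neq.
Qed.

(* Before the release time [p]'s messages are still held, so [q] sees its solo run. *)
Lemma handover_q_view T1 R1 V1 V2 t : V1 q = V2 q -> t <= R1 ->
  let s1 := sim A p q (handover p q T1) R1 V1 t in
  let s2 := sim A p q (solo q T1) 0 V2 t in
  [/\ scfg s1 q = scfg s2 q, inbox s1 q = inbox s2 q, answered s1 = answered s2 & held s2 = [::]].
Proof.
move=> hv; elim: t => [|t IH] lt; first by rewrite /= hv.
have [e1 e2 e3 e4] := IH (ltnW lt).
have nR : t != R1 by rewrite neq_ltn lt.
have [h1 h2] := tick_held_nil 0 t e4.
cbv zeta; case: (ltnP t T1) => tT.
  have E1 : handover p q T1 t = Some p by rewrite /handover tT.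
  have E2 : solo q T1 t = None by rewrite /solo tT.
  rewrite (sim_busy _ _ _ _ _ E1) (sim_idle _ _ _ _ _ E2) /= eq_sym (negbTE pq) record_query_neq //.
  by rewrite /inbox_at /sim_pre ?scfg_tick ?answered_tick h1 h2 tick_neq // e1 e2 e3.
have E1 : handover p q T1 t = Some q by rewrite /handover ltnNge tT.
have E2 : solo q T1 t = Some q by rewrite /solo ltnNge tT.
rewrite (sim_busy _ _ _ _ _ E1) (sim_busy _ _ _ _ _ E2) /= eqxx.
rewrite /sim_out /inbox_at /sim_pre ?scfg_tick ?answered_tick h1 h2 tick_neq // e1 e2 e3.
by split => //=; apply: outbox_pred0 => d /=; rewrite eq_sym (negbTE pq).
Qed.

End Indistinguishability.

Section Adversary.
Variables (n f : nat) (A : algorithm n) (p q : 'I_n).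
Hypotheses (pq : p != q) (two_needed : 2 <= n - f).
Hypothesis HA : solves_with A (Consensus n (n - 1)) (Consensus n f).

Lemma correct_setC1 (x y : 'I_n) : correct (fun _ => [set~ x]) y -> y = x.
Proof. by move=> cy; apply/eqP; apply: contraT => nyx; case: cy; exists 0; rewrite !inE. Qed.

Lemma solo_decides x s b : x = p \/ x = q ->
  exists t, decision (scfg (sim A p q (solo x s) 0 (fun _ => b) t) x) = Some b.
Proof.
move=> xpq; pose F : failure_pattern n := fun _ => [set~ x].
have cx : correct F x by move=> [t]; rewrite !inE eqxx.
have solo_x t y : solo x s t = Some y -> y = x by rewrite /solo; case: (t < s) => // -[].
have adm : admissible (Consensus n f) F (fun _ => b) (sim_run A p q (solo x s) 0 (fun _ => b)).
  apply: (sim_admissible A _ pq _ _ _ _ _ _ two_needed).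
  - by move=> t y /solo_x ->; rewrite !inE eqxx.
  - by move=> t y /solo_x ->.
  - move=> y /correct_setC1 -> t; exists (maxn t s); split; first exact: leq_maxl.
    by rewrite /solo ltnNge leq_maxr.
  - by move=> y /correct_setC1 ->.
  - by move=> t /solo_x xp /correct_setC1 xq; move: pq; rewrite xp xq eqxx.
  - by move=> /correct_setC1 xp t /solo_x xq; move: pq; rewrite xp xq eqxx.
have isF : is_failure_pattern F by move=> t t' _; apply: subxx.
have fewF : at_most_faulty F (n - 1).
  by exists [set~ x]; rewrite cardsC1 card_ord; split => [|y [t]] //; lia.
have [term _ _ valid] := HA isF fewF adm.
have [t [v Dv]] := term x cx.
by exists t; rewrite Dv (valid _ _ _ Dv b).
Qed.

Lemma handover_disagreement : False.
Proof.
have [tp Dp] := solo_decides 0 false (or_introl erefl).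
have [tq Dq] := solo_decides tp true (or_intror erefl).
pose F : failure_pattern n := fun t => if t < tp then [set~ p] :&: [set~ q] else [set~ q].
pose V := fun x : 'I_n => x != p.
have cF x : correct F x -> x = q.
  by move=> cx; apply/eqP; apply: contraT => nx; case: cx; exists tp; rewrite /F ltnn !inE.
have ncp : ~ correct F p by apply; exists tp; rewrite /F ltnn !inE.
have adm : admissible (Consensus n f) F V (sim_run A p q (handover p q tp) (maxn tp tq) V).
  apply: (sim_admissible A _ pq _ _ _ _ _ _ two_needed).
  - by move=> t x; rewrite /handover /F; case: ifP => _ [<-]; rewrite !inE ?eqxx.
  - by move=> t x; rewrite /handover; case: ifP => _ [<-]; [left|right].
  - move=> x /cF -> t; exists (maxn t tp); split; first exact: leq_maxl.
    by rewrite /handover ltnNge leq_maxr.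
  - by move=> x /cF ->; right.
  - move=> t; rewrite /handover; case: ifP => [lt _ _|_ [qp]]; last by move: pq; rewrite qp eqxx.
    exact: leq_trans lt (leq_maxl _ _).
  - by move=> /ncp.
have isF : is_failure_pattern F.
  move=> t t' le; rewrite /F; case: ifP => h; case: ifP => h' //; first exact: subsetIr.
  by move: h; rewrite (leq_ltn_trans le h').
have fewF : at_most_faulty F (n - 1).
  exists [set~ q]; rewrite cardsC1 card_ord; split; first lia.
  by move=> x [t]; rewrite /F; case: ifP => // _; rewrite inE => /andP [].
have [_ _ agree _] := HA isF fewF adm.
have Vp : V p = false by rewrite /V eqxx.
have Vq : V q = true by rewrite /V eq_sym.
have [ep _] := handover_p_view A pq (maxn tp tq) 0 Vp (leqnn tp).
have [eq _ _ _] := handover_q_view A pq tp Vq (leq_maxr tp tq).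
by have := agree _ _ tp tq _ _ (etrans (congr1 _ ep) Dp) (etrans (congr1 _ eq) Dq).
Qed.

End Adversary.

Lemma Cons_wait_free_not_reducible n f : 1 <= f -> f <= n - 2 ->
  ~ C_reducible (Consensus n (n - 1)) (Consensus n f).
Proof.
move=> f_gt0 f_le [A HA].
have n_gt1 : 1 < n by lia.
have := @handover_disagreement n f A (Ordinal (ltnW n_gt1)) (Ordinal n_gt1).
by apply=> //; lia.
Qed.

Theorem mainTheorem15 (n f : nat) :
  1 <= f -> f <= n - 2 ->
  C_reducible (@Consensus n f) (@Consensus n (n - 1)) /\
  ~ C_reducible (@Consensus n (n - 1)) (@Consensus n f).
Proof.
move=> f_gt0 f_le; split; first exact: Cons_reducible_wait_free.
exact: Cons_wait_free_not_reducible.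
Qed.
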